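(* Consider an $N$-player game where player $i$ has a convex compact set $X_i\subseteq\mathbb{R}^{n_i}$ and a real-valued objective $f_i$ with $f_i(\cdot,x_{-i})$ $\rho_i$-weakly convex on $\mathbb{R}^{n_i}$ for every $x_{-i}$, and let $0<\eta<\min_i\rho_i^{-1}$. Suppose that for every $i$ and $x_{-i}$ the subdifferential map $\partial_{x_i}f_i(\cdot,x_{-i})$ is $L_i$-Lipschitz. Let $x^*\in X$ be a QNE of the Moreau-smoothed game, i.e. $\nabla_{x_i}f_i^\eta(x_i^*,x_{-i}^* )^\top(x_i-x_i^* )\ge0$ for all $x_i\in X_i$ and all $i$, and suppose $\|\nabla_{x_i}f_i^\eta(x_i^*,x_{-i}^* )\|\le M^*$ for all $i$. Then $x^*$ is an $\eta LDM^*$-QNE of the original game, where $L\triangleq\max_iL_i$ and $D\triangleq\max_i\operatorname{diam}(X_i)$.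
   Context: A function $g$ is $\rho$-weakly convex if $g+\frac\rho2\|\cdot\|^2$ is convex; its subdifferential is $\partial g(x)=\partial(g+\frac\rho2\|\cdot\|^2)(x)-\rho x$. $f_i^\eta(x_i,x_{-i})\triangleq\min_{y\in\mathbb{R}^{n_i}}\{f_i(y,x_{-i})+\frac1{2\eta}\|y-x_i\|^2\}$ is the Moreau envelope in $x_i$ (differentiable in $x_i$ for $\eta<\rho_i^{-1}$). A set-valued map $F$ is $L$-Lipschitz if $F(u)\subseteq F(v)+L\|u-v\|\mathbb{B}$ for all $u,v$, with $\mathbb{B}$ the closed unit ball. For $\epsilon\ge0$, $x^*\in X$ is an $\epsilon$-QNE of the original game if for every $i$, $f_i'(x_i^*,x_{-i}^*;x_i-x_i^* )\ge-\epsilon$ for all $x_i\in X_i$, where $f_i'(\cdot,x_{-i}^*;d)$ is the directional derivative of $f_i(\cdot,x^*_{-i})$. *)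

From HB Require Import structures.
From mathcomp Require Import all_boot all_order all_algebra.
From mathcomp Require Import all_classical all_reals all_analysis.
Set Implicit Arguments. Unset Strict Implicit. Unset Printing Implicit Defensive.
Import Order.TTheory GRing.Theory Num.Theory.
Import numFieldNormedType.Exports.
Local Open Scope classical_set_scope.
Local Open Scope ring_scope.

Section Defs.
Variable R : realType.

Definition dotv n (u v : 'rV[R]_n) : R := \sum_(j < n) u 0 j * v 0 j.
Definition enorm n (v : 'rV[R]_n) : R := Num.sqrt (dotv v v).

Definition convex_fun n (h : 'rV[R]_n -> R) : Prop :=
  forall (x y : 'rV[R]_n) (t : R), 0 <= t <= 1 ->
    h (t *: x + (1 - t) *: y) <= t * h x + (1 - t) * h y.

Definition weakly_convex n (rho : R) (g : 'rV[R]_n -> R) : Prop :=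
  convex_fun (fun y => g y + rho / 2 * (enorm y) ^+ 2).

Definition cvx_subdiff n (h : 'rV[R]_n -> R) (x : 'rV[R]_n) : set 'rV[R]_n :=
  [set v | forall y, h x + dotv v (y - x) <= h y].

Definition wsubdiff n (rho : R) (g : 'rV[R]_n -> R) (x : 'rV[R]_n) : set 'rV[R]_n :=
  [set w - rho *: x | w in cvx_subdiff (fun y => g y + rho / 2 * (enorm y) ^+ 2) x].

Definition setval_lipschitz n (F : 'rV[R]_n -> set 'rV[R]_n) (L : R) : Prop :=
  forall u v a, F u a -> exists2 b, F v b & enorm (a - b) <= L * enorm (u - v).

Definition moreau n (eta : R) (g : 'rV[R]_n -> R) (x : 'rV[R]_n) : R :=
  inf [set g y + (2 * eta)^-1 * (enorm (y - x)) ^+ 2 | y in [set: 'rV[R]_n]].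

Definition is_gradient n (g : 'rV[R]_n -> R) (x gr : 'rV[R]_n) : Prop :=
  forall e : R, 0 < e -> exists2 d : R, 0 < d & forall h : 'rV[R]_n,
    enorm h < d -> `|g (x + h) - g x - dotv gr h| <= e * enorm h.

Definition is_dir_deriv n (g : 'rV[R]_n -> R) (x d : 'rV[R]_n) (l : R) : Prop :=
  (fun t : R => (g (x + t *: d) - g x) / t) @ 0^'+ --> l.

Definition diam n (X : set 'rV[R]_n) : R :=
  sup [set enorm (u - v) | u in X & v in X].

End Defs.

(* Games: N players, player i has strategies in R^(n i); a joint profile is a
   dependent function; (y, x_{-i}) is  dfwith x y  (x with component i set to y). *)
Definition profile (R : realType) (N : nat) (n : 'I_N -> nat) :=
  forall i : 'I_N, 'rV[R]_(n i).

Definition partial_obj (R : realType) (N : nat) (n : 'I_N -> nat)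
  (f : 'I_N -> profile R n -> R) (i : 'I_N) (x : profile R n) : 'rV[R]_(n i) -> R :=
  fun y => f i (@dfwith _ (fun j => 'rV[R]_(n j)) x i y).
Arguments partial_obj {R N n} f i x _.

Definition eps_QNE (R : realType) (N : nat) (n : 'I_N -> nat)
  (X : forall i : 'I_N, set 'rV[R]_(n i)) (f : 'I_N -> profile R n -> R)
  (eps : R) (xs : profile R n) : Prop :=
  (forall i, X i (xs i)) /\
  forall i (xi : 'rV[R]_(n i)), X i xi ->
    exists l : R, is_dir_deriv (partial_obj f i xs) (xs i) (xi - xs i) l /\ - eps <= l.

From HB Require Import structures.
From mathcomp Require Import all_boot all_order all_algebra.
From mathcomp Require Import all_classical all_reals all_analysis.
From mathcomp Require Import ring lra.
Import Order.TTheory GRing.Theory Num.Theory.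
Import numFieldNormedType.Exports.
Local Open Scope classical_set_scope.
Local Open Scope ring_scope.
Set Implicit Arguments. Unset Strict Implicit. Unset Printing Implicit Defensive.

(* If the Moreau envelope of the rho-weakly convex function F = f_i(., x*_{-i})
   has gradient g at x*_i, then p = x*_i - eta g minimizes the proximal
   objective, so g is a weak subgradient of F at p.  The Lipschitz property of
   the subdifferential moves g to a subgradient v of F at x*_i with
   |g - v| <= L eta |g|, and the directional derivative of a weakly convex
   function dominates every subgradient, whence
   F'(x*_i; x_i - x*_i) >= <g, x_i - x*_i> - L eta |g| |x_i - x*_i| >= - eta L D M*. *)

Section InnerProduct.
Variables (R : realType) (n : nat).
Implicit Types (a : R) (u v w : 'rV[R]_n).

Lemma dotvC u v : dotv u v = dotv v u.
Proof. by apply: eq_bigr => j _; rewrite mulrC. Qed.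

Lemma dotvDl u v w : dotv (u + v) w = dotv u w + dotv v w.
Proof. by rewrite /dotv -big_split; apply: eq_bigr => j _; rewrite mxE mulrDl. Qed.

Lemma dotvZl a u v : dotv (a *: u) v = a * dotv u v.
Proof. by rewrite /dotv mulr_sumr; apply: eq_bigr => j _; rewrite mxE mulrA. Qed.

Lemma dotvNl u v : dotv (- u) v = - dotv u v.
Proof. by rewrite -scaleN1r dotvZl mulN1r. Qed.

Lemma dotvBl u v w : dotv (u - v) w = dotv u w - dotv v w.
Proof. by rewrite dotvDl dotvNl. Qed.

Lemma dotv0l v : dotv 0 v = 0.
Proof. by rewrite -(scale0r 0) dotvZl mul0r. Qed.

Lemma dotvDr u v w : dotv w (u + v) = dotv w u + dotv w v.
Proof. by rewrite dotvC dotvDl !(dotvC w). Qed.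

Lemma dotvZr a u v : dotv v (a *: u) = a * dotv v u.
Proof. by rewrite dotvC dotvZl dotvC. Qed.

Lemma dotvNr u v : dotv v (- u) = - dotv v u.
Proof. by rewrite dotvC dotvNl dotvC. Qed.

Lemma dotvBr u v w : dotv w (u - v) = dotv w u - dotv w v.
Proof. by rewrite dotvDr dotvNr. Qed.

Lemma dotv0r v : dotv v 0 = 0.
Proof. by rewrite dotvC dotv0l. Qed.

Definition dotvE :=
  (dotvDl, dotvDr, dotvZl, dotvZr, dotvNl, dotvNr, dotvBl, dotvBr, dotv0l, dotv0r).

Lemma dotv_delta v (k : 'I_n) : dotv v (delta_mx 0 k) = v 0 k.
Proof.
rewrite /dotv (bigD1 k) //= big1 ?addr0; first by rewrite mxE !eqxx mulr1.
by move=> j /negPf jk; rewrite mxE jk andbF mulr0.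
Qed.

Lemma dotvv_ge0 v : 0 <= dotv v v.
Proof. by apply: sumr_ge0 => j _; rewrite -expr2 sqr_ge0. Qed.

Lemma enorm_ge0 v : 0 <= enorm v.
Proof. exact: sqrtr_ge0. Qed.

Lemma enorm_sqr v : enorm v ^+ 2 = dotv v v.
Proof. by rewrite /enorm sqr_sqrtr // dotvv_ge0. Qed.

Lemma enormZ a v : enorm (a *: v) = `|a| * enorm v.
Proof.
by rewrite /enorm dotvZl dotvZr mulrA -expr2 sqrtrM ?sqr_ge0 // sqrtr_sqr.
Qed.

Lemma enormN v : enorm (- v) = enorm v.
Proof. by rewrite -scaleN1r enormZ normrN normr1 mul1r. Qed.

Lemma enormZ_sqr a v : enorm (a *: v) ^+ 2 = a ^+ 2 * enorm v ^+ 2.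
Proof. by rewrite enormZ exprMn real_normK // num_real. Qed.

Lemma enormD_sqr u v :
  enorm (u + v) ^+ 2 = enorm u ^+ 2 + 2 * dotv u v + enorm v ^+ 2.
Proof. by rewrite !enorm_sqr !dotvE (dotvC v u); ring. Qed.

Lemma dotv_sqr_le u v : dotv u v ^+ 2 <= dotv u u * dotv v v.
Proof.
set A := dotv u u; set B := dotv u v; set C := dotv v v.
have expand t : dotv (u + t *: v) (u + t *: v) = A + 2 * t * B + t ^+ 2 * C.
  by rewrite !dotvE /A /B /C (dotvC v u); ring.
have A0 : 0 <= A := dotvv_ge0 u.
have [C0|C0] := eqVneq C 0.
  have [->|B0] := eqVneq B 0; first by rewrite expr0n /= mulr_ge0 ?dotvv_ge0.
  have := dotvv_ge0 (u + (- (A + 1) / (2 * B)) *: v).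
  rewrite expand C0 mulr0 addr0.
  have -> : 2 * (- (A + 1) / (2 * B)) * B = - (A + 1) by field.
  lra.
have Cpos : 0 < C by rewrite lt_neqAle eq_sym C0 dotvv_ge0.
have := dotvv_ge0 (u + (- B / C) *: v); rewrite expand => H.
have : 0 <= (A + 2 * (- B / C) * B + (- B / C) ^+ 2 * C) * C by rewrite mulr_ge0 // ltW.
have -> : (A + 2 * (- B / C) * B + (- B / C) ^+ 2 * C) * C = A * C - B ^+ 2.
  by field; rewrite gt_eqF.
lra.
Qed.

Lemma normr_dotv_le u v : `|dotv u v| <= enorm u * enorm v.
Proof.
rewrite /enorm -sqrtrM ?dotvv_ge0 // -sqrtr_sqr.
by rewrite ler_sqrt ?mulr_ge0 ?dotvv_ge0 // dotv_sqr_le.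
Qed.

Lemma dotv_ge_Nenorm u v : - (enorm u * enorm v) <= dotv u v.
Proof. by have := normr_dotv_le u v; rewrite ler_norml => /andP[]. Qed.

End InnerProduct.

Section Subgradient.
Variables (R : realType) (n : nat).
Implicit Types (a b : R) (v w : 'rV[R]_n).

(* Linear minorants of a convex function vanishing at 0 are built one
   coordinate at a time, as in the finite-dimensional Hahn-Banach theorem. *)
Definition supported_below k v := forall j : 'I_n, (k <= j)%N -> v 0 j = 0.

Lemma supported_below0 k : supported_below k 0.
Proof. by move=> j _; rewrite mxE. Qed.

Lemma supported_belowD k a b v w : supported_below k v -> supported_below k w ->
  supported_below k (a *: v + b *: w).
Proof. by move=> sv sw j kj; rewrite !mxE sv // sw // !mulr0 addr0. Qed.

Section Extension.
Variables (q : 'rV[R]_n -> R) (k : nat) (c : 'rV[R]_n).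
Hypotheses (qconv : convex_fun q)
  (c_le : forall v, supported_below k v -> dotv c v <= q v).

Lemma left_slope_le_right_slope (e v w : 'rV[R]_n) a b :
  supported_below k v -> supported_below k w -> 0 < a -> 0 < b ->
  (dotv c v - q (v - a *: e)) / a <= (q (w + b *: e) - dotv c w) / b.
Proof.
move=> sv sw a0 b0; set l := b / (a + b).
have ab0 : a + b != 0 by rewrite gt_eqF ?addr_gt0.
have l01 : 0 <= l <= 1.
  apply/andP; split; first by rewrite /l divr_ge0 // ltW // addr_gt0.
  by rewrite /l ler_pdivrMr ?addr_gt0 // mul1r; lra.
have mid : l *: (v - a *: e) + (1 - l) *: (w + b *: e) = l *: v + (1 - l) *: w.
  by apply/matrixP => i j; rewrite !mxE /l; field.
have := qconv (v - a *: e) (w + b *: e) l01; rewrite mid.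
have := c_le (supported_belowD l (1 - l) sv sw); rewrite !dotvE.
set X := dotv c v - q (v - a *: e); set Y := q (w + b *: e) - dotv c w => H1 H2.
have : (a + b) * (l * X - (1 - l) * Y) <= 0.
  by apply: mulr_ge0_le0; [rewrite ltW ?addr_gt0 | rewrite /X /Y; lra].
have -> : (a + b) * (l * X - (1 - l) * Y) = a * b * (X / a - Y / b).
  by rewrite /l; field; rewrite ab0 !gt_eqF.
by rewrite pmulr_rle0 ?mulr_gt0 // subr_le0.
Qed.

Hypothesis (k_lt_n : (k < n)%N) (c_supp : supported_below k c).

Lemma dominated_extend : exists c',
  supported_below k.+1 c' /\ forall v, supported_below k.+1 v -> dotv c' v <= q v.
Proof.
(* The new coefficient is the supremum of the left slopes along e, which stays
   below every right slope. *)
pose kk : 'I_n := Ordinal k_lt_n; pose e : 'rV[R]_n := delta_mx 0 kk.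
pose A := [set (dotv c v - q (v - a *: e)) / a |
           a in [set a | 0 < a] & v in supported_below k].
have A_ub w b : supported_below k w -> 0 < b ->
    ubound A ((q (w + b *: e) - dotv c w) / b).
  by move=> sw b0 _ [a a0 [v sv <-]]; apply: left_slope_le_right_slope.
have A_sup : has_sup A.
  split; first by exists ((dotv c 0 - q (0 - 1 *: e)) / 1), 1;
    [exact: ltr01 | exists 0; first exact: supported_below0].
  exists ((q (0 + 1 *: e) - dotv c 0) / 1).
  by apply: (A_ub 0 1); [exact: supported_below0 | exact: ltr01].
exists (c + sup A *: e); split.
  move=> j kj; have jk : j != kk by rewrite -(inj_eq val_inj) /= gtn_eqF.
  by rewrite !mxE c_supp ?(ltnW kj) // (negPf jk) andbF mulr0 addr0.
move=> v' sv'; set t := v' 0 kk; set v := v' - t *: e.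
have sv : supported_below k v.
  move=> j kj; rewrite !mxE; have [->|jk] := eqVneq j kk.
    by rewrite !eqxx mulr1 subrr.
  rewrite sv' ?(negPf jk) ?andbF ?mulr0 ?subr0 //.
  by rewrite ltn_neqAle kj andbT eq_sym -(inj_eq val_inj) in jk *.
have v'E : v' = v + t *: e by rewrite subrK.
have -> : dotv (c + sup A *: e) v' = dotv c v + sup A * t.
  rewrite dotvDl dotvZl (dotvC e) dotv_delta -/t v'E dotvDr dotvZr dotv_delta.
  by rewrite c_supp // mulr0 addr0.
have [t0|t0|t0] := ltgtP t 0.
- have : (dotv c v - q (v - (- t) *: e)) / (- t) <= sup A.
    apply: ub_le_sup; first by case: A_sup.
    by exists (- t); [rewrite /= oppr_gt0 | exists v].
  rewrite scaleNr opprK -v'E ler_pdivrMr ?oppr_gt0 //; lra.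
- have : sup A <= (q (v + t *: e) - dotv c v) / t.
    by apply: sup_le_ub; [case: A_sup | apply: A_ub].
  rewrite -v'E ler_pdivlMr //; lra.
- by rewrite t0 mulr0 addr0 v'E t0 scale0r addr0; apply: c_le.
Qed.

End Extension.

Lemma convex_dominated_linear (q : 'rV[R]_n -> R) : convex_fun q -> q 0 = 0 ->
  exists c, forall v, dotv c v <= q v.
Proof.
move=> qconv q0.
have dominated k : (k <= n)%N -> exists c, supported_below k c /\
    forall v, supported_below k v -> dotv c v <= q v.
  elim: k => [|k IH] kn.
    exists 0; split=> [|v sv]; first exact: supported_below0.
    have -> : v = 0 by apply/matrixP => i j; rewrite ord1 sv // mxE.
    by rewrite dotv0l q0.
  have [c [sc c_le]] := IH (ltnW kn).
  exact: dominated_extend qconv c_le kn sc.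
have [c [_ c_le]] := dominated n (leqnn n).
by exists c => v; apply: c_le => j; rewrite leqNgt ltn_ord.
Qed.

Lemma convex_subgradient (h : 'rV[R]_n -> R) x : convex_fun h ->
  exists s, cvx_subdiff h x s.
Proof.
move=> hconv; pose q v := h (x + v) - h x.
have qconv : convex_fun q.
  move=> u v t t01; rewrite /q.
  have -> : x + (t *: u + (1 - t) *: v) = t *: (x + u) + (1 - t) *: (x + v).
    by apply/matrixP => i j; rewrite !mxE; ring.
  have := hconv (x + u) (x + v) t t01; lra.
have q0 : q 0 = 0 by rewrite /q addr0 subrr.
have [s s_le] := convex_dominated_linear qconv q0.
by exists s => y; have := s_le (y - x); rewrite /q (addrC x) subrK; lra.
Qed.

End Subgradient.

Section DirectionalDerivative.
Variables (R : realType) (n : nat).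
Implicit Types (x v w d : 'rV[R]_n).

Lemma convex_dir_deriv (h : 'rV[R]_n -> R) x w d : convex_fun h ->
  cvx_subdiff h x w -> exists2 l, is_dir_deriv h x d l & dotv w d <= l.
Proof.
move=> hconv hw; pose qh t := (h (x + t *: d) - h x) / t.
have qh_ge t : 0 < t -> dotv w d <= qh t.
  move=> t0; rewrite /qh ler_pdivlMr //.
  by have := hw (x + t *: d); rewrite (addrC x) addrK dotvZr; lra.
have qh_mono : {in `]0, 1[ &, nondecreasing_fun qh}.
  move=> s t; rewrite !in_itv /= => /andP[s0 _] /andP[t0 _] st.
  have st01 : 0 <= s / t <= 1.
    by apply/andP; split; [rewrite divr_ge0 // ltW | rewrite ler_pdivrMr // mul1r].
  have := hconv (x + t *: d) x (s / t) st01.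
  have -> : s / t *: (x + t *: d) + (1 - s / t) *: x = x + s *: d.
    by apply/matrixP => i j; rewrite !mxE; field; rewrite gt_eqF.
  move=> H; rewrite /qh ler_pdivrMr // -subr_ge0.
  have -> : (h (x + t *: d) - h x) / t * s - (h (x + s *: d) - h x) =
      s / t * (h (x + t *: d) - h x) - (h (x + s *: d) - h x).
    by field; rewrite gt_eqF.
  by rewrite subr_ge0; lra.
have qh_lb : has_lbound [set qh t | t in `]0, 1[].
  by exists (dotv w d) => _ [t + <-]; rewrite /= in_itv /= => /andP[t0 _]; apply: qh_ge.
have ab : (BRight (0 : R) < BLeft (1 : R))%O by rewrite bnd_simp.
exists (inf [set qh t | t in `]0, 1[]).
  exact: nondecreasing_at_right_cvgr ab qh_mono qh_lb.
apply: lb_le_inf; first by exists (qh (1 / 2)), (1 / 2) => //; rewrite /= in_itv /=; lra.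
by move=> _ [t + <-]; rewrite /= in_itv /= => /andP[t0 _]; apply: qh_ge.
Qed.

Lemma weakly_convex_dir_deriv rho (F : 'rV[R]_n -> R) x v d :
  weakly_convex rho F -> wsubdiff rho F x v ->
  exists2 l, is_dir_deriv F x d l & dotv v d <= l.
Proof.
move=> Fwc [w hw <-]; have [l hl wl] := convex_dir_deriv d Fwc hw.
exists (l - rho * dotv x d); last by rewrite dotvBl dotvZl (dotvC x); lra.
set h := fun y => F y + rho / 2 * enorm y ^+ 2 in hl.
have quotE : {near 0^'+, (fun t => (h (x + t *: d) - h x) / t -
      (rho * dotv x d + rho / 2 * dotv d d * t)) =1
    (fun t => (F (x + t *: d) - F x) / t)}.
  near=> t; have t0 : 0 < t by near: t; exact: nbhs_right_gt.
  by rewrite /h !enorm_sqr !dotvE (dotvC d x); field; rewrite gt_eqF.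
have t_cvg : (fun t : R => t) @ 0^'+ --> (0 : R).
  by apply: cvg_at_right_filter; exact: cvg_id.
have lin_cvg : (fun t => rho / 2 * dotv d d * t) @ 0^'+ --> (0 : R).
  by rewrite -[X in _ --> X](mulr0 (rho / 2 * dotv d d)); apply: cvgMl_tmp.
apply: cvg_trans (near_eq_cvg quotE) _; apply: cvgB => //.
by rewrite -[X in _ --> X]addr0; apply: cvgD => //; exact: cvg_cst.
Unshelve. all: by end_near.
Qed.

End DirectionalDerivative.

Lemma le0_of_le_scale (R : realFieldType) (D C : R) :
  (forall t, 0 < t <= 1 -> D <= t * C) -> D <= 0.
Proof.
move=> DtC; apply/ler_addgt0Pr => e e0; rewrite add0r.
have C1 : 0 < `|C| + 1 by rewrite ltr_pwDr.
set t := Num.min 1 (e / (`|C| + 1)).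
have t0 : 0 < t by rewrite lt_min ltr01 divr_gt0.
have te : t * (`|C| + 1) <= e by rewrite -ler_pdivlMr // ge_min lexx orbT.
apply: le_trans (DtC t _) _; first by rewrite t0 ge_min lexx.
have := ler_wpM2l (ltW t0) (ler_norm C); lra.
Qed.

Definition prox_obj (R : realType) n (eta : R) (F : 'rV[R]_n -> R) (x y : 'rV[R]_n) :=
  F y + (2 * eta)^-1 * enorm (y - x) ^+ 2.

Section Moreau.
Variables (R : realType) (n : nat) (F : 'rV[R]_n -> R) (rho eta : R).
Hypotheses (eta_gt0 : 0 < eta) (eta_lt : eta < rho^-1) (Fwc : weakly_convex rho F).
Implicit Types (x y z p g : 'rV[R]_n).

Let h y := F y + rho / 2 * enorm y ^+ 2.
(* psi x is kappa-strongly convex; eta < rho^-1 is exactly kappa > 0. *)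
Let kappa := (2 * eta)^-1 - rho / 2.
Let psi := prox_obj eta F.

Lemma prox_modulus_gt0 : 0 < kappa.
Proof.
have rho_gt0 : 0 < rho by rewrite -invr_gt0; apply: lt_trans eta_lt.
have -> : kappa = (1 - rho * eta) / (2 * eta) by rewrite /kappa; field; rewrite gt_eqF.
by rewrite divr_gt0 ?mulr_gt0 // subr_gt0 mulrC -ltr_pdivlMr // div1r.
Qed.

Lemma prox_objD x p z : psi x (p + z) =
  psi x p + (h (p + z) - h p) + dotv (eta^-1 *: (p - x) - rho *: p) z + kappa * enorm z ^+ 2.
Proof.
rewrite /psi /prox_obj /h /kappa (addrAC p) !enormD_sqr !dotvE.
by field; rewrite gt_eqF.
Qed.

Lemma prox_obj_subgrad x p s y : cvx_subdiff h p s ->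
  psi x p + dotv (s + eta^-1 *: (p - x) - rho *: p) (y - p) + kappa * enorm (y - p) ^+ 2
  <= psi x y.
Proof.
move=> hs; have := hs y.
have py : p + (y - p) = y by rewrite addrC subrK.
by have := prox_objD x p (y - p); rewrite !py => ->; rewrite !dotvE; lra.
Qed.

Lemma prox_obj_bounded_below x : exists M, forall y, M <= psi x y.
Proof.
have [s hs] := convex_subgradient x Fwc.
set a := s + eta^-1 *: (x - x) - rho *: x.
exists (psi x x - enorm a ^+ 2 / (4 * kappa)) => y.
have := prox_obj_subgrad x y hs; rewrite -/a; set t := enorm (y - x) => psi_ge.
have k0 := prox_modulus_gt0.
have : 0 <= (2 * kappa * t - enorm a) ^+ 2 / (4 * kappa).
  by rewrite divr_ge0 ?sqr_ge0 // ltW // mulr_gt0.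
have -> : (2 * kappa * t - enorm a) ^+ 2 / (4 * kappa) =
    kappa * t ^+ 2 - enorm a * t + enorm a ^+ 2 / (4 * kappa).
  by field; rewrite gt_eqF.
have := dotv_ge_Nenorm a (y - x); rewrite -/t; lra.
Qed.

Lemma moreau_le x y : moreau eta F x <= psi x y.
Proof.
have [M hM] := prox_obj_bounded_below x.
by apply: ge_inf; [exists M => _ [y' _ <-]; apply: hM | exists y].
Qed.

Lemma moreau_adherent x e : 0 < e -> exists y, psi x y < moreau eta F x + e.
Proof.
move=> e0; have [M hM] := prox_obj_bounded_below x.
have psi_inf : has_inf [set psi x y | y in [set: 'rV[R]_n]].
  by split; [exists (psi x 0), 0 | exists M => _ [y _ <-]; apply: hM].
have [_ [y _ <-] ?] := inf_adherent e0 psi_inf.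
by exists y.
Qed.

Lemma prox_obj_shift x w y : psi (x + w) y =
  psi x y - eta^-1 * dotv (y - x) w + (2 * eta)^-1 * enorm w ^+ 2.
Proof.
rewrite /psi /prox_obj opprD addrA (enormD_sqr (y - x)) enormN dotvNr.
by field; rewrite gt_eqF.
Qed.

Lemma moreau_gradient_approx x g c : is_gradient (moreau eta F) x g -> 0 < c ->
  exists y, psi x y <= moreau eta F x + c /\ enorm (g - eta^-1 *: (x - y)) <= 3 * c.
Proof.
move=> hg c0; have [d d0 hd] := hg c c0.
set r := Num.min (Num.min (d / 2) (2 * eta * c)) 1.
have r0 : 0 < r by rewrite !lt_min ltr01 !mulr_gt0 ?divr_gt0.
have : r <= r by [].
rewrite {2}/r !le_min => /andP[/andP[r_d r_etac] r1].
have [y hy] := moreau_adherent x (mulr_gt0 r0 c0).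
exists y; split.
  have : r * c <= c by rewrite ler_piMl // ltW.
  lra.
(* Differentiability of the envelope at x in the direction w of u, played
   against moreau (x + w) <= psi (x + w) y, gives r |u| <= 3 r c. *)
set u := g - eta^-1 *: (x - y).
have [u0|u_neq0] := eqVneq (enorm u) 0; first by rewrite u0 mulr_ge0 // ltW.
have u_gt0 : 0 < enorm u by rewrite lt_neqAle eq_sym u_neq0 enorm_ge0.
set w := (r / enorm u) *: u.
have w_norm : enorm w = r.
  by rewrite enormZ ger0_norm ?divr_ge0 ?enorm_ge0 ?ltW //; field; rewrite gt_eqF.
have uw : dotv u w = r * enorm u.
  by rewrite dotvZr -enorm_sqr; field; rewrite gt_eqF.
have uwE : dotv u w = dotv g w + eta^-1 * dotv (y - x) w.
  by rewrite /u !dotvE; ring.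
have w_lt_d : enorm w < d by rewrite w_norm; lra.
have := hd w w_lt_d; rewrite w_norm ler_norml => /andP[dm _].
have := moreau_le (x + w) y; rewrite prox_obj_shift w_norm => mw.
have r2 : (2 * eta)^-1 * r ^+ 2 <= r * c.
  rewrite expr2 mulrCA ler_pM2l // mulrC ler_pdivrMr ?mulr_gt0 //.
  by rewrite mulrC.
rewrite -(ler_pM2l r0); lra.
Qed.

Lemma moreau_gradient_prox_le x g : is_gradient (moreau eta F) x g ->
  psi x (x - eta *: g) <= moreau eta F x.
Proof.
(* A near-minimizer y of psi x lies within 3 eta c of p, and the subgradient
   inequality at p bounds psi x p by psi x y + 3 eta c |W|. *)
move=> hg; set p := x - eta *: g.
have [s hs] := convex_subgradient p Fwc.
set W := s + eta^-1 *: (p - x) - rho *: p.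
apply/ler_addgt0Pr => tau tau0.
have den_gt0 : 0 < 1 + 3 * eta * enorm W.
  by rewrite ltr_pwDl // !mulr_ge0 ?enorm_ge0 ?ltW.
set c := tau / (1 + 3 * eta * enorm W).
have [y [hy hu]] := moreau_gradient_approx hg (divr_gt0 tau0 den_gt0).
set u := g - eta^-1 *: (x - y) in hu.
have yp : y - p = eta *: u.
  by apply/matrixP => i j; rewrite !mxE; field; rewrite gt_eqF.
have := prox_obj_subgrad x y hs; rewrite -/W yp dotvZr.
have Wu : - (enorm W * (3 * c)) <= dotv W u.
  by apply: le_trans (dotv_ge_Nenorm W u); rewrite lerN2 ler_wpM2l ?enorm_ge0.
have := ler_wpM2l (ltW eta_gt0) Wu.
have : 0 <= kappa * enorm (eta *: u) ^+ 2 by rewrite mulr_ge0 ?sqr_ge0 ?ltW ?prox_modulus_gt0.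
have : c * (1 + 3 * eta * enorm W) = tau by rewrite /c; field; rewrite gt_eqF.
rewrite -/c in hy; lra.
Qed.

Lemma moreau_gradient_wsubdiff x g : is_gradient (moreau eta F) x g ->
  wsubdiff rho F (x - eta *: g) g.
Proof.
move=> hg; set p := x - eta *: g.
have p_min t z : psi x p <= psi x (p + t *: z).
  exact: le_trans (moreau_gradient_prox_le hg) (moreau_le _ _).
have px : eta^-1 *: (p - x) = - g.
  by rewrite /p addrAC subrr add0r scalerN scalerA mulVf ?gt_eqF // scale1r.
exists (g + rho *: p); last by rewrite addrK.
clearbody p; suff p_sub z : h p + dotv (g + rho *: p) z <= h (p + z).
  by move=> y; have := p_sub (y - p); rewrite (addrC p) subrK.
rewrite -subr_le0; apply: (@le0_of_le_scale _ _ (kappa * enorm z ^+ 2)).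
move=> t /andP[t0 t1]; have := p_min t z; rewrite prox_objD px.
have : h (p + t *: z) <= t * h (p + z) + (1 - t) * h p.
  have -> : p + t *: z = t *: (p + z) + (1 - t) *: p.
    by apply/matrixP => i j; rewrite !mxE; ring.
  by apply: Fwc; rewrite t1 ltW.
rewrite enormZ_sqr !dotvE => conv mon.
rewrite -(ler_pM2l t0); lra.
Qed.

Lemma moreau_gradient_dir_deriv Lc x g d :
  setval_lipschitz (wsubdiff rho F) Lc -> is_gradient (moreau eta F) x g ->
  exists2 l, is_dir_deriv F x d l & dotv g d - Lc * (eta * enorm g) * enorm d <= l.
Proof.
move=> Lip hg; have [v hv gv] := Lip _ x _ (moreau_gradient_wsubdiff hg).
have [l hl vl] := weakly_convex_dir_deriv d Fwc hv.
exists l => //; move: gv.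
rewrite addrAC subrr add0r enormN enormZ gtr0_norm // => /(ler_wpM2r (enorm_ge0 d)).
have := dotv_ge_Nenorm (v - g) d; rewrite dotvBl -enormN opprB; lra.
Qed.

End Moreau.

Section Diameter.
Variables (R : realType) (n : nat).

Lemma enorm_le_normr (v : 'rV[R]_n) B : `|v| <= B -> enorm v <= Num.sqrt (n%:R * B ^+ 2).
Proof.
move=> vB; rewrite ler_sqrt; last by rewrite mulr_ge0 // sqr_ge0.
have -> : n%:R * B ^+ 2 = \sum_(j < n) B ^+ 2 by rewrite sumr_const card_ord mulr_natl.
apply: ler_sum => j _.
have vjB : `|v 0 j| <= B.
  apply: le_trans vB; rewrite [leRHS]mx_normrE.
  exact: (le_bigmax 0 (fun ij : 'I_1 * 'I_n => `|v ij.1 ij.2|) (0, j)).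
by rewrite -expr2 -real_normK ?num_real // ler_pXn2r ?nnegrE // (le_trans _ vjB).
Qed.

Lemma enorm_le_diam (X : set 'rV[R]_n) u v : compact X -> X u -> X v ->
  enorm (u - v) <= diam X.
Proof.
move=> Xcpt Xu Xv; have [M [_ XM]] := compact_bounded Xcpt.
have XM1 z : X z -> `|z| <= M + 1 by move=> Xz; apply: XM => //; lra.
apply: ub_le_sup; last by exists u => //; exists v.
exists (Num.sqrt (n%:R * (2 * (M + 1)) ^+ 2)) => _ [a Xa [b Xb <-]].
apply/enorm_le_normr/(le_trans (ler_normB _ _)).
by have := XM1 a Xa; have := XM1 b Xb; lra.
Qed.

End Diameter.

Unset Implicit Arguments.

Theorem theorem4p2 (R : realType) (N : nat) (n : 'I_N -> nat)
  (X : forall i : 'I_N, set 'rV[R]_(n i)) (f : 'I_N -> profile R n -> R)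
  (rho L : 'I_N -> R) (eta Mstar : R) (xs : profile R n) :
  (forall i, convex_set (X i)) ->
  (forall i, compact (X i)) ->
  (forall i, 0 < rho i) ->
  (forall i (x : profile R n), weakly_convex (rho i) (partial_obj f i x)) ->
  0 < eta -> (forall i, eta < (rho i)^-1) ->
  (forall i (x : profile R n),
     setval_lipschitz (wsubdiff (rho i) (partial_obj f i x)) (L i)) ->
  (forall i, X i (xs i)) ->
  (forall i, exists2 g : 'rV[R]_(n i),
     is_gradient (moreau eta (partial_obj f i xs)) (xs i) g &
     (forall xi, X i xi -> 0 <= dotv g (xi - xs i)) /\ enorm g <= Mstar) ->
  eps_QNE X f (eta * (\big[Num.max/0]_(i < N) L i)
                   * (\big[Num.max/0]_(i < N) diam (X i)) * Mstar) xs.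
Proof.
move=> _ Xcpt _ Fwc eta_gt0 eta_lt Lip Xxs QNE; split => // i xi Xxi.
have [g hg [g_QNE g_le]] := QNE i.
have [l hl gl] := moreau_gradient_dir_deriv eta_gt0 (eta_lt i) (Fwc i xs) (xi - xs i) (Lip i xs) hg.
exists l; split => //.
set Lm := \big[Num.max/0]_(j < N) L j; set Dm := \big[Num.max/0]_(j < N) diam (X j).
have Li_le : L i <= Lm := le_bigmax 0 L i.
have Lm_ge0 : 0 <= Lm by exact: bigmax_ge_id.
have d_le : enorm (xi - xs i) <= Dm.
  exact: le_trans (enorm_le_diam (Xcpt i) Xxi (Xxs i)) (le_bigmax 0 (fun j => diam (X j)) i).
have err_le : L i * (eta * enorm g) * enorm (xi - xs i) <= eta * Lm * Dm * Mstar.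
  have eg_ge0 : 0 <= eta * enorm g by rewrite mulr_ge0 ?enorm_ge0 ?ltW.
  have egd_le : eta * enorm g * enorm (xi - xs i) <= eta * Mstar * Dm.
    by apply: ler_pM => //; [exact: enorm_ge0 | rewrite ler_wpM2l // ltW].
  apply: (@le_trans _ _ (Lm * (eta * enorm g * enorm (xi - xs i)))).
    by rewrite -mulrA ler_wpM2r // mulr_ge0 // enorm_ge0.
  have -> : eta * Lm * Dm * Mstar = Lm * (eta * Mstar * Dm) by ring.
  exact: ler_wpM2l.
have := g_QNE xi Xxi; lra.
Qed.
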